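(* With the notation of the context, the functions $d$ and $g$ are $C^1$ on $(-1,1)$, and $d>0$, $g>0$. Moreover $$\lim_{\rho\to1^-}d(\rho)=\lambda e^{-rT}s_0e^{(\nu-\eta\frac{\mu-r}{\sigma}-\frac{\eta^2}{2})T},\qquad \lim_{\rho\to-1^+}d(\rho)=\lambda e^{-rT}s_0e^{(\nu+\eta\frac{\mu-r}{\sigma}-\frac{\eta^2}{2})T},$$ $$\lim_{\rho\to1^-}g(\rho)=\lambda e^{-rT}s_0e^{(\nu-\eta\frac{\mu-r}{\sigma})T},\qquad \lim_{\rho\to-1^+}g(\rho)=\lambda e^{-rT}s_0e^{(\nu+\eta\frac{\mu-r}{\sigma})T}.$$ For all $\rho\in(-1,1)$, $$\left(b(\rho)-\frac{\lambda e^{-rT}}{\theta(\rho)}\frac{w(\rho)^2}{2\eta^4T^2}e_2\right)_+\le a(\rho)\le b(\rho),$$ where $e_2=e^{2\eta^2T}-2(1+\eta^2T)e^{\frac{\eta^2T}{2}}+\eta^2T+1$. Moreover, $a$, $b$, $d$ and $g$ are bounded on $(-1,1)$.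
   Context: Fix $T>0$, $r,\nu,\mu\in\mathbb R$, $\eta>0$, $\sigma>0$, $s_0>0$, $\lambda>0$, $\gamma>0$; $N$ is a standard Gaussian random variable; $W$ is the Lambert function (inverse of $x\in(-1,\infty)\mapsto xe^x$). For $\rho\in(-1,1)$ define $\theta(\rho)=\lambda\gamma(1-\rho^2)$, $$w(\rho)=W\left(s_0\eta^2Te^{(\nu-\eta\rho\frac{\mu-r}{\sigma}-\frac{\eta^2}{2})T}\theta(\rho)\right),\qquad d(\rho)=\frac{\lambda e^{-rT}}{\theta(\rho)\eta^2T}\,w(\rho)\left(1+\frac{w(\rho)}{2}\right),$$ $$a(\rho)=-\frac{\lambda e^{-rT}}{\theta(\rho)}\ln\mathbb E\left(\exp\left(-\frac{w(\rho)}{\eta^2T}\left(e^{\eta\sqrt TN}-1-\eta\sqrt TN\right)\right)\right),\qquad b(\rho)=\frac{\lambda e^{-rT}}{\theta(\rho)}\frac{w(\rho)}{\eta^2T}\left(e^{\frac{\eta^2}{2}T}-1\right),$$ $$g(\rho)=d(\rho)+b(\rho)=\frac{\lambda e^{-rT}}{\theta(\rho)}\frac{w(\rho)}{\eta^2T}\left(e^{\frac{\eta^2}{2}T}+\frac{w(\rho)}{2}\right).$$ $x_+=\max(x,0)$. *)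

From Stdlib Require Import Reals ClassicalEpsilon.
From Coquelicot Require Import Coquelicot.
Open Scope R_scope.

(* Lambert W (principal branch): inverse of y in (-1,oo) |-> y e^y.
   For x in the range (-1/e, oo) it returns the unique y > -1 with y e^y = x. *)
Definition LambertW (x : R) : R :=
  epsilon (inhabits 0) (fun y => -1 < y /\ y * exp y = x).

Definition gauss_expect (f : R -> R) : R :=
  RInt_gen (fun x => f x * (exp (- x ^ 2 / 2) / sqrt (2 * PI)))
           (Rbar_locally m_infty) (Rbar_locally p_infty).

Definition theta (lam gam rho : R) : R := lam * gam * (1 - rho ^ 2).

Definition wfun (T nu mu r eta sigma s0 lam gam rho : R) : R :=
  LambertW (s0 * eta ^ 2 * T
            * exp ((nu - eta * rho * ((mu - r) / sigma) - eta ^ 2 / 2) * T)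
            * theta lam gam rho).

Definition dfun (T nu mu r eta sigma s0 lam gam rho : R) : R :=
  let w := wfun T nu mu r eta sigma s0 lam gam rho in
  lam * exp (- r * T) / (theta lam gam rho * eta ^ 2 * T) * w * (1 + w / 2).

Definition afun (T nu mu r eta sigma s0 lam gam rho : R) : R :=
  let w := wfun T nu mu r eta sigma s0 lam gam rho in
  - (lam * exp (- r * T) / theta lam gam rho)
  * ln (gauss_expect (fun x =>
          exp (- (w / (eta ^ 2 * T))
               * (exp (eta * sqrt T * x) - 1 - eta * sqrt T * x)))).

Definition bfun (T nu mu r eta sigma s0 lam gam rho : R) : R :=
  let w := wfun T nu mu r eta sigma s0 lam gam rho in
  lam * exp (- r * T) / theta lam gam rho * (w / (eta ^ 2 * T))
  * (exp (eta ^ 2 / 2 * T) - 1).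

Definition gfun (T nu mu r eta sigma s0 lam gam rho : R) : R :=
  dfun T nu mu r eta sigma s0 lam gam rho + bfun T nu mu r eta sigma s0 lam gam rho.

Definition e2 (T eta : R) : R :=
  exp (2 * eta ^ 2 * T) - 2 * (1 + eta ^ 2 * T) * exp (eta ^ 2 * T / 2)
  + eta ^ 2 * T + 1.

Definition C1_on (f : R -> R) (lo hi : R) : Prop :=
  forall x, lo < x < hi -> ex_derive f x /\ continuous (Derive f) x.

Definition bounded_on (f : R -> R) (lo hi : R) : Prop :=
  exists M, forall x, lo < x < hi -> Rabs (f x) <= M.

(* Write [w = W (c theta)], where [c(rho) = s0 eta^2 T e^((nu - eta rho (mu - r)/sigma
   - eta^2/2) T)] is smooth and positive on [[-1, 1]] and [theta] vanishes at [rho = -1, 1].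
   The identity [w e^w = c theta] turns [d] and [b] into [K c e^(-w) (1 + w/2)] and
   [K c e^(-w) (e^(eta^2 T/2) - 1)] with [K = lambda e^(-rT) / (eta^2 T)]; since
   [0 < w <= c theta], [w] tends to [0] at the endpoints, which gives positivity, boundedness
   and the limits, while regularity comes from the inverse function theorem for [W].
   For [a], let [Y = (w / (eta^2 T)) (e^(sN) - 1 - sN) >= 0] with [s = eta sqrt T]. The
   Gaussian moment generating function [E e^(kN) = e^(k^2/2)] gives [m = E Y] and [E Y^2],
   and integrating [e^(-m) (1 + m - Y) <= e^(-Y) <= 1 - Y + Y^2/2] gives
   [e^(-m) <= E e^(-Y) <= 1 - m + E Y^2 / 2]; with [ln z <= z - 1] this yields the bounds on
   [a = -(lambda e^(-rT) / theta) ln E e^(-Y)].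
   The normalisation [int e^(-x^2) = sqrt pi] behind all Gaussian moments comes from the
   classical fact that [t |-> int_0^1 e^(-t^2 (1+u^2)) / (1+u^2) du + (int_0^t e^(-x^2))^2]
   has zero derivative. *)

From Stdlib Require Import Reals Lra Psatz Ranalysis5 ClassicalEpsilon.
From Coquelicot Require Import Coquelicot.
Open Scope R_scope.

Lemma continuous_of_ex_derive (f : R -> R) x : ex_derive f x -> continuous f x.
Proof. apply (ex_derive_continuous (K := R_AbsRing) (V := R_NormedModule)). Qed.

Lemma ex_RInt_of_continuous (f : R -> R) a b : (forall x, continuous f x) -> ex_RInt f a b.
Proof. intros Hf; apply (ex_RInt_continuous (V := R_CompleteNormedModule)); auto. Qed.

Lemma RInt_scal_R (f : R -> R) a b k : ex_RInt f a b -> RInt (fun x => k * f x) a b = k * RInt f a b.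
Proof. apply (RInt_scal (V := R_CompleteNormedModule)). Qed.

Lemma RInt_Chasles_R (f : R -> R) a b c :
  ex_RInt f a b -> ex_RInt f b c -> RInt f a b + RInt f b c = RInt f a c.
Proof. apply (RInt_Chasles (V := R_CompleteNormedModule)). Qed.

Lemma is_derive_eq (f : R -> R) x (l l' : R) : is_derive f x l -> l = l' :> R -> is_derive f x l'.
Proof. intros H <-; exact H. Qed.

Lemma exp_le_compat x y : x <= y -> exp x <= exp y.
Proof. intros [Hlt | ->]; [left; apply exp_increasing |]; lra. Qed.

Lemma filterlim_Rmult {U} {F : (U -> Prop) -> Prop} {FF : Filter F} (f g : U -> R) a b :
  filterlim f F (locally a) -> filterlim g F (locally b) ->
  filterlim (fun x => f x * g x) F (locally (a * b)).
Proof. intros Hf Hg; apply (filterlim_comp_2 f g Rmult Hf Hg), (filterlim_mult (K := R_AbsRing)). Qed.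

Lemma filterlim_Rplus {U} {F : (U -> Prop) -> Prop} {FF : Filter F} (f g : U -> R) a b :
  filterlim f F (locally a) -> filterlim g F (locally b) ->
  filterlim (fun x => f x + g x) F (locally (a + b)).
Proof.
  intros Hf Hg; apply (filterlim_comp_2 f g Rplus Hf Hg), (filterlim_plus (V := R_NormedModule)).
Qed.

Lemma filterlim_continuous_comp {U} {F : (U -> Prop) -> Prop} (f : U -> R) (g : R -> R) a :
  filterlim f F (locally a) -> continuous g a -> filterlim (fun x => g (f x)) F (locally (g a)).
Proof. intros Hf Hg; apply (filterlim_comp _ _ _ f g F (locally a)); assumption. Qed.

(** * The Gaussian integral *)

Definition gauss (x : R) := exp (- x ^ 2).

Lemma continuous_gauss x : continuous gauss x.
Proof. apply continuous_of_ex_derive; unfold gauss; auto_derive; exact I. Qed.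

Lemma ex_RInt_gauss a b : ex_RInt gauss a b.
Proof. apply ex_RInt_of_continuous, continuous_gauss. Qed.

Lemma is_derive_RInt_gauss t : is_derive (fun t => RInt gauss 0 t) t (gauss t).
Proof.
  apply is_derive_RInt with (a := 0); [| apply continuous_gauss].
  apply filter_forall; intros; apply RInt_correct, ex_RInt_gauss.
Qed.

Lemma ex_RInt_gauss_dilate t : ex_RInt (fun u => gauss (t * u)) 0 1.
Proof.
  apply ex_RInt_of_continuous; intros.
  apply (continuous_comp (fun u => t * u) gauss); [| apply continuous_gauss].
  apply continuous_of_ex_derive; auto_derive; exact I.
Qed.

Lemma RInt_gauss_dilate t : RInt gauss 0 t = t * RInt (fun u => gauss (t * u)) 0 1.
Proof.
  rewrite <- RInt_scal_R.
  - assert (H := RInt_comp_lin gauss t 0 0 1 (ex_RInt_gauss _ _)).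
    replace (t * 0 + 0) with 0 in H by ring; replace (t * 1 + 0) with t in H by ring.
    rewrite <- H; apply RInt_ext; intros; rewrite Rplus_0_r; reflexivity.
  - apply ex_RInt_gauss_dilate.
Qed.

Definition gauss_kernel (t u : R) := exp (- (t ^ 2 * (1 + u ^ 2))) / (1 + u ^ 2).

Lemma one_plus_sq_pos u : 0 < 1 + u ^ 2.
Proof. nra. Qed.

Lemma is_derive_gauss_kernel t u :
  is_derive (fun t => gauss_kernel t u) t (-2 * t * exp (- (t ^ 2 * (1 + u ^ 2)))).
Proof.
  assert (Hu := one_plus_sq_pos u).
  unfold gauss_kernel; auto_derive; [lra |].
  replace (t * (t * 1) * (1 + u * (u * 1))) with (t ^ 2 * (1 + u ^ 2)) by ring; field; lra.
Qed.

Lemma continuous_gauss_kernel t u : continuous (gauss_kernel t) u.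
Proof.
  assert (Hu := one_plus_sq_pos u).
  apply continuous_of_ex_derive; unfold gauss_kernel; auto_derive; lra.
Qed.

Lemma continuity_2d_pt_gauss_kernel_derive t u :
  continuity_2d_pt (fun z v => -2 * z * exp (- (z ^ 2 * (1 + v ^ 2)))) t u.
Proof.
  apply continuity_2d_pt_mult.
  - apply continuity_2d_pt_mult; [apply continuity_2d_pt_const | apply continuity_2d_pt_id1].
  - apply (continuity_1d_2d_pt_comp exp); [apply derivable_continuous_pt, derivable_pt_exp |].
    apply (continuity_2d_pt_ext (fun z v => - (z * (z * 1) * (1 + v * (v * 1))))); [reflexivity |].
    repeat first [ apply continuity_2d_pt_opp | apply continuity_2d_pt_mult
                 | apply continuity_2d_pt_plus | apply continuity_2d_pt_id1
                 | apply continuity_2d_pt_id2 | apply continuity_2d_pt_const ].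
Qed.

Lemma is_derive_RInt_gauss_kernel t :
  is_derive (fun t => RInt (gauss_kernel t) 0 1) t
    (-2 * t * gauss t * RInt (fun u => gauss (t * u)) 0 1).
Proof.
  replace (-2 * t * gauss t * RInt (fun u => gauss (t * u)) 0 1)
    with (RInt (fun u => Derive (fun z => gauss_kernel z u) t) 0 1).
  - apply (is_derive_RInt_param gauss_kernel).
    + apply filter_forall; intros; eexists; apply is_derive_gauss_kernel.
    + intros u _.
      apply (continuity_2d_pt_ext (fun z v => -2 * z * exp (- (z ^ 2 * (1 + v ^ 2))))).
      * intros; symmetry; apply is_derive_unique, is_derive_gauss_kernel.
      * apply continuity_2d_pt_gauss_kernel_derive.
    + apply filter_forall; intros; apply ex_RInt_of_continuous, continuous_gauss_kernel.
  - rewrite <- RInt_scal_R.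
    + apply RInt_ext; intros u _.
      erewrite is_derive_unique; [| apply is_derive_gauss_kernel].
      unfold gauss; rewrite (Rmult_assoc (-2 * t)), <- exp_plus; f_equal; f_equal; ring.
    + apply ex_RInt_gauss_dilate.
Qed.

Lemma is_derive_gauss_potential t :
  is_derive (fun t => RInt (gauss_kernel t) 0 1 + (RInt gauss 0 t) ^ 2) t 0.
Proof.
  assert (Hsq : is_derive (fun t => (RInt gauss 0 t) ^ 2) t (2 * RInt gauss 0 t * gauss t)).
  { apply (is_derive_ext (fun t => RInt gauss 0 t * RInt gauss 0 t)); [intros; simpl; ring |].
    replace (2 * RInt gauss 0 t * gauss t)
      with (gauss t * RInt gauss 0 t + RInt gauss 0 t * gauss t) by ring.
    apply (is_derive_mult (fun t => RInt gauss 0 t)); try apply is_derive_RInt_gauss.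
    intros; apply Rmult_comm. }
  eapply is_derive_eq.
  - apply (is_derive_plus (fun t => RInt (gauss_kernel t) 0 1)); [| exact Hsq].
    apply is_derive_RInt_gauss_kernel.
  - rewrite RInt_gauss_dilate; unfold plus; simpl; ring.
Qed.

Lemma RInt_inv_one_plus_sq : RInt (fun u => / (1 + u ^ 2)) 0 1 = PI / 4.
Proof.
  rewrite (is_RInt_unique _ _ _ (atan 1 - atan 0)); [rewrite atan_1, atan_0; lra |].
  apply (is_RInt_derive (V := R_CompleteNormedModule) atan).
  - intros x _; replace (x ^ 2) with (Rsqr x) by (unfold Rsqr; ring); apply is_derive_atan.
  - intros x _; assert (Hx := one_plus_sq_pos x).
    apply continuous_of_ex_derive; auto_derive; lra.
Qed.

Lemma gauss_potential_const t :
  0 < t -> RInt (gauss_kernel t) 0 1 + (RInt gauss 0 t) ^ 2 = PI / 4.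
Proof.
  intros Ht.
  rewrite <- (eq_is_derive (fun t => RInt (gauss_kernel t) 0 1 + (RInt gauss 0 t) ^ 2) 0 t);
    [| intros; apply is_derive_gauss_potential | exact Ht].
  rewrite (RInt_point (V := R_CompleteNormedModule)), <- RInt_inv_one_plus_sq.
  change (@zero R_AbsRing) with 0; rewrite pow_ne_zero, Rplus_0_r by discriminate.
  apply RInt_ext; intros; unfold gauss_kernel.
  replace (- (0 ^ 2 * (1 + x ^ 2))) with 0 by ring; rewrite exp_0; apply Rmult_1_l.
Qed.

Lemma RInt_gauss_kernel_bounds t : 0 <= RInt (gauss_kernel t) 0 1 <= exp (- t ^ 2).
Proof.
  assert (Hex : ex_RInt (gauss_kernel t) 0 1)
    by (apply ex_RInt_of_continuous, continuous_gauss_kernel).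
  assert (Hpt : forall u, 0 <= gauss_kernel t u <= exp (- t ^ 2)).
  { intros u; assert (Hu := one_plus_sq_pos u); unfold gauss_kernel; split.
    - apply Rle_mult_inv_pos; [apply Rlt_le, exp_pos | lra].
    - apply Rle_trans with (exp (- (t ^ 2 * (1 + u ^ 2)))).
      + unfold Rdiv; rewrite <- (Rmult_1_r (exp _)) at 2.
        apply Rmult_le_compat_l; [apply Rlt_le, exp_pos |].
        rewrite <- Rinv_1; apply Rinv_le_contravar; nra.
      + apply exp_le_compat; nra. }
  split.
  - apply RInt_ge_0; auto; [lra | intros; apply Hpt].
  - replace (exp (- t ^ 2)) with (RInt (fun _ => exp (- t ^ 2)) 0 1)
      by (rewrite (RInt_const (V := R_CompleteNormedModule)); cbn; ring).
    apply RInt_le; auto; [lra | apply ex_RInt_const | intros; apply Hpt].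
Qed.

Lemma is_lim_sq_infty z : z = p_infty \/ z = m_infty -> is_lim (fun x => x ^ 2) z p_infty.
Proof.
  intros Hz; apply (is_lim_ext (fun x => x * x)); [intros; ring |].
  replace p_infty with (Rbar_mult z z) by (destruct Hz as [-> | ->]; reflexivity).
  apply is_lim_mult; try apply is_lim_id; destruct Hz as [-> | ->]; exact I.
Qed.

Lemma is_lim_neg_scal_sq a z :
  0 < a -> z = p_infty \/ z = m_infty -> is_lim (fun x => - (a * x ^ 2)) z m_infty.
Proof.
  intros Ha Hz; apply (is_lim_opp (fun x => a * x ^ 2) z p_infty).
  replace p_infty with (Rbar_mult a p_infty)
    by (apply is_Rbar_mult_unique, is_Rbar_mult_sym, is_Rbar_mult_p_infty_pos; exact Ha).
  apply is_lim_scal_l, is_lim_sq_infty, Hz.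
Qed.

Lemma is_lim_exp_neg_scal_sq a z :
  0 < a -> z = p_infty \/ z = m_infty -> is_lim (fun x => exp (- (a * x ^ 2))) z 0.
Proof.
  intros Ha Hz; apply (is_lim_comp exp (fun x => - (a * x ^ 2)) z 0 m_infty).
  - apply is_lim_exp_m.
  - apply is_lim_neg_scal_sq; assumption.
  - destruct Hz as [-> | ->]; exists 0; intros; discriminate.
Qed.

Lemma is_lim_mul_exp_neg_scal_sq a z :
  0 < a -> z = p_infty \/ z = m_infty -> is_lim (fun x => x * exp (- (a * x ^ 2))) z 0.
Proof.
  intros Ha Hz.
  apply (is_lim_ext_loc (fun x => (- / a * / x) * (- (a * x ^ 2) * exp (- (a * x ^ 2))))).
  - destruct Hz as [-> | ->]; exists 0; intros x Hx; field; lra.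
  - replace (Finite 0) with (Rbar_mult (- / a * 0) 0) by (simpl; f_equal; ring).
    apply is_lim_mult; [| | exact I].
    + replace (Finite (- / a * 0)) with (Rbar_mult (- / a) (Rbar_inv z))
        by (destruct Hz as [-> | ->]; reflexivity).
      apply is_lim_scal_l, is_lim_inv; [apply is_lim_id | destruct Hz as [-> | ->]; discriminate].
    + apply (is_lim_comp (fun y => y * exp y) (fun x => - (a * x ^ 2)) z 0 m_infty).
      * apply is_lim_mul_exp_m.
      * apply is_lim_neg_scal_sq; assumption.
      * destruct Hz as [-> | ->]; exists 0; intros; discriminate.
Qed.

Lemma RInt_gauss_nonneg t : 0 <= t -> 0 <= RInt gauss 0 t.
Proof.
  intros Ht; apply RInt_ge_0; auto; [apply ex_RInt_gauss |].
  intros; apply Rlt_le, exp_pos.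
Qed.

Lemma is_lim_RInt_gauss : is_lim (fun t => RInt gauss 0 t) p_infty (sqrt PI / 2).
Proof.
  assert (Hker : is_lim (fun t => RInt (gauss_kernel t) 0 1) p_infty 0).
  { apply (is_lim_le_le_loc (fun _ => 0) (fun t => exp (- t ^ 2))).
    - exists 0; intros; apply RInt_gauss_kernel_bounds.
    - apply is_lim_const.
    - apply (is_lim_ext (fun t => exp (- (1 * t ^ 2)))); [intros; rewrite Rmult_1_l; reflexivity |].
      apply is_lim_exp_neg_scal_sq; [lra | auto]. }
  apply (is_lim_ext_loc (fun t => sqrt (PI / 4 - RInt (gauss_kernel t) 0 1))).
  - exists 0; intros t Ht.
    rewrite <- (gauss_potential_const t Ht), Rplus_minus_l.
    apply sqrt_pow2, RInt_gauss_nonneg; lra.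
  - replace (sqrt PI / 2) with (sqrt (PI / 4 - 0)).
    + apply (filterlim_comp _ _ _ _ sqrt _ (locally (PI / 4 - 0))); [| apply continuous_sqrt].
      apply (is_lim_minus' (fun _ => PI / 4)); [apply is_lim_const | exact Hker].
    + rewrite Rminus_0_r, sqrt_div_alt by lra.
      replace 4 with (2 ^ 2) by ring; rewrite sqrt_pow2; lra.
Qed.

(** * The standard normal density *)

Definition normal_pdf (x : R) := exp (- x ^ 2 / 2) / sqrt (2 * PI).

(* [normal_cdf0 x] is [P(N <= x) - 1/2]. *)
Definition normal_cdf0 (x : R) := RInt gauss 0 (x / sqrt 2) / sqrt PI.

Lemma sqrt2_pos : 0 < sqrt 2.
Proof. apply sqrt_lt_R0; lra. Qed.

Lemma sqrtPI_pos : 0 < sqrt PI.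
Proof. apply sqrt_lt_R0, PI_RGT_0. Qed.

Lemma normal_pdf_pos x : 0 < normal_pdf x.
Proof. apply Rdiv_lt_0_compat; [apply exp_pos | apply sqrt_lt_R0; generalize PI_RGT_0; lra]. Qed.

Lemma is_derive_normal_pdf x : is_derive normal_pdf x (- x * normal_pdf x).
Proof.
  assert (H2PI := sqrt_lt_R0 (2 * PI) ltac:(generalize PI_RGT_0; lra)).
  unfold normal_pdf; auto_derive; [lra |].
  replace (- (x * (x * 1)) * / 2) with (- x ^ 2 / 2) by field; field; lra.
Qed.

Lemma continuous_normal_pdf x : continuous normal_pdf x.
Proof. apply continuous_of_ex_derive; eexists; apply is_derive_normal_pdf. Qed.

Lemma is_derive_normal_cdf0 x : is_derive normal_cdf0 x (normal_pdf x).
Proof.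
  assert (H2 := sqrt2_pos); assert (HPI := sqrtPI_pos).
  assert (Hlin : is_derive (fun x => x / sqrt 2) x (/ sqrt 2))
    by (auto_derive; [lra | field; lra]).
  apply (is_derive_ext (fun x => / sqrt PI * RInt gauss 0 (x / sqrt 2)));
    [intros; unfold normal_cdf0, Rdiv; apply Rmult_comm |].
  eapply is_derive_eq.
  - apply (is_derive_scal (fun x => RInt gauss 0 (x / sqrt 2))).
    apply (is_derive_comp (fun u => RInt gauss 0 u) (fun x => x / sqrt 2));
      [apply is_derive_RInt_gauss | apply Hlin].
  - change (scal ?a ?b) with (a * b); unfold normal_pdf, gauss.
    rewrite sqrt_mult by (generalize PI_RGT_0; lra).
    replace (- (x / sqrt 2) ^ 2) with (- x ^ 2 / 2)
      by (unfold Rdiv; rewrite Rpow_mult_distr, pow_inv, pow2_sqrt; lra).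
    field; lra.
Qed.

Lemma normal_cdf0_opp x : normal_cdf0 (- x) = - normal_cdf0 x.
Proof.
  assert (Hodd : forall s, RInt gauss 0 (- s) = - RInt gauss 0 s).
  { intros s; assert (H := RInt_comp_lin gauss (-1) 0 0 s (ex_RInt_gauss _ _)).
    replace (-1 * 0 + 0) with 0 in H by ring; replace (-1 * s + 0) with (- s) in H by ring.
    rewrite <- H, (RInt_ext _ (fun y => -1 * gauss y)).
    - rewrite RInt_scal_R by apply ex_RInt_gauss; simpl; ring.
    - intros y _; change (scal ?a ?b) with (a * b); unfold gauss.
      replace ((-1 * y + 0) ^ 2) with (y ^ 2) by ring; reflexivity. }
  unfold normal_cdf0; replace (- x / sqrt 2) with (- (x / sqrt 2)) by (unfold Rdiv; ring).
  rewrite Hodd; unfold Rdiv; ring.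
Qed.

Lemma is_lim_normal_cdf0_p : is_lim normal_cdf0 p_infty (1 / 2).
Proof.
  assert (H2 := sqrt2_pos); assert (HPI := sqrtPI_pos).
  replace (Finite (1 / 2)) with (Rbar_mult (sqrt PI / 2) (/ sqrt PI))
    by (simpl; f_equal; field; lra).
  apply (is_lim_mult (fun x => RInt gauss 0 (x / sqrt 2)) (fun _ => / sqrt PI));
    [| apply is_lim_const | exact I].
  apply (is_lim_comp (fun u => RInt gauss 0 u) (fun x => x / sqrt 2) p_infty _ p_infty);
    [apply is_lim_RInt_gauss | | exists 0; intros; discriminate].
  replace p_infty with (Rbar_mult p_infty (/ sqrt 2)) at 2
    by (apply is_Rbar_mult_unique, is_Rbar_mult_p_infty_pos; simpl; apply Rinv_0_lt_compat, H2).
  apply (is_lim_scal_r (fun x => x)), is_lim_id.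
Qed.

Lemma is_lim_normal_cdf0_m : is_lim normal_cdf0 m_infty (- (1 / 2)).
Proof.
  apply (is_lim_ext (fun x => - normal_cdf0 (- x))); [intros; rewrite normal_cdf0_opp; ring |].
  apply (is_lim_opp (fun x => normal_cdf0 (- x)) m_infty (1 / 2)).
  apply (is_lim_comp normal_cdf0 (fun x => - x) m_infty _ p_infty);
    [apply is_lim_normal_cdf0_p | apply (is_lim_opp (fun x => x) m_infty m_infty), is_lim_id |].
  exists 0; intros; discriminate.
Qed.

Lemma normal_pdf_eq x : normal_pdf x = / sqrt (2 * PI) * exp (- (/ 2 * x ^ 2)).
Proof. unfold normal_pdf, Rdiv; rewrite Rmult_comm; do 3 f_equal; field. Qed.

Lemma is_lim_normal_pdf z : z = p_infty \/ z = m_infty -> is_lim normal_pdf z 0.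
Proof.
  intros Hz; apply (is_lim_ext (fun x => / sqrt (2 * PI) * exp (- (/ 2 * x ^ 2))));
    [intros; symmetry; apply normal_pdf_eq |].
  replace (Finite 0) with (Rbar_mult (/ sqrt (2 * PI)) 0) by (simpl; f_equal; ring).
  apply is_lim_scal_l, is_lim_exp_neg_scal_sq; [lra | exact Hz].
Qed.

Lemma is_lim_mul_normal_pdf z : z = p_infty \/ z = m_infty -> is_lim (fun x => x * normal_pdf x) z 0.
Proof.
  intros Hz; apply (is_lim_ext (fun x => / sqrt (2 * PI) * (x * exp (- (/ 2 * x ^ 2)))));
    [intros; rewrite normal_pdf_eq; ring |].
  replace (Finite 0) with (Rbar_mult (/ sqrt (2 * PI)) 0) by (simpl; f_equal; ring).
  apply is_lim_scal_l, is_lim_mul_exp_neg_scal_sq; [lra | exact Hz].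
Qed.

(** * Integrals over the real line and Gaussian moments *)

Notation is_RInt_line f l := (is_RInt_gen f (Rbar_locally m_infty) (Rbar_locally p_infty) l).

Lemma is_RInt_line_ext (f g : R -> R) l :
  (forall x, f x = g x) -> is_RInt_line f l -> is_RInt_line g l.
Proof. intros E; apply is_RInt_gen_ext, filter_forall; intros; apply E. Qed.

Lemma is_RInt_line_eq (f : R -> R) (l l' : R) : is_RInt_line f l -> l = l' -> is_RInt_line f l'.
Proof. intros H <-; exact H. Qed.

Lemma is_RInt_line_plus (f g : R -> R) lf lg :
  is_RInt_line f lf -> is_RInt_line g lg -> is_RInt_line (fun x => f x + g x) (lf + lg).
Proof. apply (is_RInt_gen_plus (V := R_NormedModule)). Qed.

Lemma is_RInt_line_scal (f : R -> R) k l :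
  is_RInt_line f l -> is_RInt_line (fun x => k * f x) (k * l).
Proof. apply (is_RInt_gen_scal (V := R_NormedModule)). Qed.

Lemma is_RInt_line_Derive (F f : R -> R) (la lb : R) :
  (forall x, is_derive F x (f x)) -> (forall x, continuous f x) ->
  is_lim F m_infty la -> is_lim F p_infty lb -> is_RInt_line f (lb - la).
Proof.
  intros HF Hf Hm Hp.
  apply (is_RInt_line_ext (Derive F)); [intros; apply is_derive_unique, HF |].
  apply is_RInt_gen_Derive; [| | exact Hm | exact Hp];
    apply filter_forall; intros ab x _; [eexists; apply HF |].
  apply (continuous_ext f); [intros; symmetry; apply is_derive_unique, HF | apply Hf].
Qed.

Lemma is_lim_comp_shift (f : R -> R) z l s :
  z = p_infty \/ z = m_infty -> is_lim f z l -> is_lim (fun x => f (x - s)) z l.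
Proof.
  intros Hz Hf; apply (is_lim_comp f (fun x => x - s) z l z Hf).
  - replace z with (Rbar_plus z (- s)) at 2 by (destruct Hz as [-> | ->]; reflexivity).
    apply (is_lim_plus (fun x => x) (fun _ => - s) z z (- s));
      [apply is_lim_id | apply is_lim_const |].
    destruct Hz as [-> | ->]; apply Rbar_plus_correct; exact I.
  - destruct Hz as [-> | ->]; exists 0; intros; discriminate.
Qed.

Lemma continuous_normal_pdf_shift s x : continuous (fun x => normal_pdf (x - s)) x.
Proof.
  apply (continuous_comp (fun x => x - s) normal_pdf); [| apply continuous_normal_pdf].
  apply continuous_of_ex_derive; auto_derive; exact I.
Qed.

Lemma is_derive_shift (f : R -> R) s x l :
  is_derive f (x - s) l -> is_derive (fun x => f (x - s)) x l.
Proof.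
  intros Hf; eapply is_derive_eq; [apply (is_derive_comp f (fun x => x - s)); [exact Hf |] |].
  - auto_derive; [exact I | reflexivity].
  - change (scal ?a ?b) with (a * b); ring.
Qed.

Lemma is_RInt_line_normal_pdf_shift s : is_RInt_line (fun x => normal_pdf (x - s)) 1.
Proof.
  apply (is_RInt_line_eq _ (1 / 2 - - (1 / 2))); [| field].
  apply (is_RInt_line_Derive (fun x => normal_cdf0 (x - s))).
  - intros; apply is_derive_shift, is_derive_normal_cdf0.
  - apply continuous_normal_pdf_shift.
  - apply is_lim_comp_shift; [now right | apply is_lim_normal_cdf0_m].
  - apply is_lim_comp_shift; [now left | apply is_lim_normal_cdf0_p].
Qed.

Lemma is_RInt_line_mul_normal_pdf_shift s :
  is_RInt_line (fun x => (x - s) * normal_pdf (x - s)) 0.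
Proof.
  apply (is_RInt_line_eq _ (-1 * 0 - -1 * 0)); [| ring].
  apply (is_RInt_line_Derive (fun x => -1 * normal_pdf (x - s))).
  - intros; eapply is_derive_eq.
    + apply (is_derive_scal (fun x => normal_pdf (x - s))), is_derive_shift, is_derive_normal_pdf.
    + change (scal ?a ?b) with (a * b); ring.
  - intros; apply (continuous_mult (fun x => x - s) (fun x => normal_pdf (x - s)));
      [apply continuous_of_ex_derive; auto_derive; exact I | apply continuous_normal_pdf_shift].
  - apply (is_lim_scal_l _ (-1) m_infty 0), is_lim_comp_shift;
      [now right | apply is_lim_normal_pdf; now right].
  - apply (is_lim_scal_l _ (-1) p_infty 0), is_lim_comp_shift;
      [now left | apply is_lim_normal_pdf; now left].
Qed.

Lemma is_RInt_line_sq_normal_pdf : is_RInt_line (fun x => x ^ 2 * normal_pdf x) 1.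
Proof.
  apply (is_RInt_line_eq _ ((1 / 2 + -1 * 0) - (- (1 / 2) + -1 * 0))); [| field].
  apply (is_RInt_line_Derive (fun x => normal_cdf0 x + -1 * (x * normal_pdf x))).
  - intros; eapply is_derive_eq.
    + apply (is_derive_plus normal_cdf0); [apply is_derive_normal_cdf0 |].
      apply (is_derive_scal (fun x => x * normal_pdf x)).
      apply (is_derive_mult (fun x => x) normal_pdf);
        [apply (is_derive_id (K := R_AbsRing)) | apply is_derive_normal_pdf | apply Rmult_comm].
    + cbn -[normal_pdf pow]; ring.
  - intros; apply (continuous_mult (fun x => x ^ 2) normal_pdf);
      [apply continuous_of_ex_derive; auto_derive; exact I | apply continuous_normal_pdf].
  - apply (is_lim_plus' normal_cdf0); [apply is_lim_normal_cdf0_m |].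
    apply (is_lim_scal_l _ (-1) m_infty 0), is_lim_mul_normal_pdf; now right.
  - apply (is_lim_plus' normal_cdf0); [apply is_lim_normal_cdf0_p |].
    apply (is_lim_scal_l _ (-1) p_infty 0), is_lim_mul_normal_pdf; now left.
Qed.

Lemma exp_mul_normal_pdf k x : exp (k * x) * normal_pdf x = exp (k ^ 2 / 2) * normal_pdf (x - k).
Proof.
  unfold normal_pdf, Rdiv; rewrite <- !Rmult_assoc, <- !exp_plus.
  f_equal; f_equal; field.
Qed.

Lemma is_RInt_line_exp_normal_pdf k :
  is_RInt_line (fun x => exp (k * x) * normal_pdf x) (exp (k ^ 2 / 2)).
Proof.
  apply (is_RInt_line_eq _ (exp (k ^ 2 / 2) * 1)); [| ring].
  apply (is_RInt_line_ext (fun x => exp (k ^ 2 / 2) * normal_pdf (x - k)));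
    [intros; symmetry; apply exp_mul_normal_pdf |].
  apply is_RInt_line_scal, is_RInt_line_normal_pdf_shift.
Qed.

Lemma is_RInt_line_mul_exp_normal_pdf k :
  is_RInt_line (fun x => x * exp (k * x) * normal_pdf x) (k * exp (k ^ 2 / 2)).
Proof.
  apply (is_RInt_line_eq _ (exp (k ^ 2 / 2) * (0 + k * 1))); [| ring].
  apply (is_RInt_line_ext
           (fun x => exp (k ^ 2 / 2) * ((x - k) * normal_pdf (x - k) + k * normal_pdf (x - k))));
    [intros; rewrite Rmult_assoc, exp_mul_normal_pdf; ring |].
  apply is_RInt_line_scal, is_RInt_line_plus;
    [apply is_RInt_line_mul_normal_pdf_shift | apply is_RInt_line_scal, is_RInt_line_normal_pdf_shift].
Qed.

Lemma is_RInt_line_normal_pdf : is_RInt_line normal_pdf 1.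
Proof.
  apply (is_RInt_line_ext (fun x => normal_pdf (x - 0))); [intros; rewrite Rminus_0_r; reflexivity |].
  apply is_RInt_line_normal_pdf_shift.
Qed.

Lemma is_RInt_line_mul_normal_pdf : is_RInt_line (fun x => x * normal_pdf x) 0.
Proof.
  apply (is_RInt_line_ext (fun x => (x - 0) * normal_pdf (x - 0)));
    [intros; rewrite Rminus_0_r; reflexivity |].
  apply is_RInt_line_mul_normal_pdf_shift.
Qed.

Definition exp_remainder (s x : R) := exp (s * x) - 1 - s * x.

Lemma exp_remainder_nonneg s x : 0 <= exp_remainder s x.
Proof. unfold exp_remainder; generalize (exp_ineq1_le (s * x)); lra. Qed.

Lemma is_RInt_line_exp_remainder s :
  is_RInt_line (fun x => exp_remainder s x * normal_pdf x) (exp (s ^ 2 / 2) - 1).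
Proof.
  apply (is_RInt_line_eq _ ((exp (s ^ 2 / 2) + -1 * 1) + - s * 0)); [| ring].
  apply (is_RInt_line_ext (fun x => (exp (s * x) * normal_pdf x + -1 * normal_pdf x)
                                    + - s * (x * normal_pdf x)));
    [intros; unfold exp_remainder; ring |].
  apply is_RInt_line_plus; [| apply is_RInt_line_scal, is_RInt_line_mul_normal_pdf].
  apply is_RInt_line_plus; [| apply is_RInt_line_scal, is_RInt_line_normal_pdf].
  apply is_RInt_line_exp_normal_pdf.
Qed.

Definition exp_remainder_moment2 (s : R) :=
  exp (2 * s ^ 2) - 2 * (1 + s ^ 2) * exp (s ^ 2 / 2) + s ^ 2 + 1.

Lemma is_RInt_line_sq_exp_remainder s :
  is_RInt_line (fun x => exp_remainder s x ^ 2 * normal_pdf x) (exp_remainder_moment2 s).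
Proof.
  apply (is_RInt_line_eq _
           (exp ((2 * s) ^ 2 / 2) + -2 * exp (s ^ 2 / 2) + -2 * s * (s * exp (s ^ 2 / 2))
            + 1 + 2 * s * 0 + s ^ 2 * 1));
    [| unfold exp_remainder_moment2; replace ((2 * s) ^ 2 / 2) with (2 * s ^ 2) by field; ring].
  apply (is_RInt_line_ext
           (fun x => exp ((2 * s) * x) * normal_pdf x + -2 * (exp (s * x) * normal_pdf x)
                     + -2 * s * (x * exp (s * x) * normal_pdf x) + normal_pdf x
                     + 2 * s * (x * normal_pdf x) + s ^ 2 * (x ^ 2 * normal_pdf x))).
  { intros; unfold exp_remainder.
    replace (2 * s * x) with (s * x + s * x) by ring; rewrite exp_plus; ring. }
  apply is_RInt_line_plus; [| apply is_RInt_line_scal, is_RInt_line_sq_normal_pdf].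
  apply is_RInt_line_plus; [| apply is_RInt_line_scal, is_RInt_line_mul_normal_pdf].
  apply is_RInt_line_plus; [| apply is_RInt_line_normal_pdf].
  apply is_RInt_line_plus; [| apply is_RInt_line_scal, is_RInt_line_mul_exp_normal_pdf].
  apply is_RInt_line_plus; [| apply is_RInt_line_scal, is_RInt_line_exp_normal_pdf].
  apply is_RInt_line_exp_normal_pdf.
Qed.

Lemma ball_R (x e y : R) : ball x e y <-> Rabs (y - x) < e.
Proof. reflexivity. Qed.

Lemma filter_prod_infty (M1 M2 : R) :
  filter_prod (Rbar_locally m_infty) (Rbar_locally p_infty) (fun ab => fst ab < M1 /\ M2 < snd ab).
Proof.
  apply (Filter_prod _ _ _ (fun a => a < M1) (fun b => M2 < b)); [exists M1 | exists M2 |]; auto.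
Qed.

Lemma is_RInt_line_le (f g : R -> R) (lf lg : R) :
  (forall x, f x <= g x) -> is_RInt_line f lf -> is_RInt_line g lg -> lf <= lg.
Proof.
  intros Hfg Hf Hg.
  cut (Rabs (0 * lf) <= lg - lf); [rewrite Rmult_0_l, Rabs_R0; lra |].
  apply (RInt_gen_norm (Fa := Rbar_locally m_infty) (Fb := Rbar_locally p_infty)
           (fun x => 0 * f x) (fun x => g x - f x)).
  - eapply filter_imp; [| apply (filter_prod_infty 0 0)]; intros ab; simpl; lra.
  - apply filter_forall; intros ab x _.
    change (norm ?y) with (Rabs y); rewrite Rmult_0_l, Rabs_R0; specialize (Hfg x); lra.
  - apply (is_RInt_gen_scal (V := R_NormedModule)), Hf.
  - apply (is_RInt_gen_minus (V := R_NormedModule)); assumption.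
Qed.

Lemma is_RInt_line_iff (f : R -> R) (l : R) : (forall a b, ex_RInt f a b) ->
  is_RInt_line f l <->
  filterlim (fun ab => RInt f (fst ab) (snd ab))
    (filter_prod (Rbar_locally m_infty) (Rbar_locally p_infty)) (locally l).
Proof.
  intros Hf; unfold is_RInt_gen, filterlimi, filterlim, filter_le, filtermapi, filtermap.
  split; intros H P HP; specialize (H P HP); revert H;
    apply filter_imp; intros [a b]; simpl.
  - intros [y [Hy Py]]; rewrite (is_RInt_unique _ _ _ _ Hy); exact Py.
  - intros Py; exists (RInt f a b); split; [| exact Py].
    apply (RInt_correct (V := R_CompleteNormedModule)), Hf.
Qed.

Lemma Rabs_RInt_le_Rabs_RInt (f g : R -> R) a b :
  ex_RInt f a b -> ex_RInt g a b -> (forall x, 0 <= f x <= g x) ->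
  Rabs (RInt f a b) <= Rabs (RInt g a b).
Proof.
  intros Hf Hg Hfg.
  assert (Hle : forall a b, a <= b -> ex_RInt f a b -> ex_RInt g a b ->
                0 <= RInt f a b <= RInt g a b).
  { intros u v Huv Hfu Hgu; split;
      [apply RInt_ge_0 | apply RInt_le]; auto; intros; apply Hfg. }
  destruct (Rle_dec a b) as [Hab | Hab].
  - destruct (Hle a b Hab Hf Hg); rewrite !Rabs_right; lra.
  - apply ex_RInt_swap in Hf; apply ex_RInt_swap in Hg.
    destruct (Hle b a ltac:(lra) Hf Hg).
    rewrite <- (opp_RInt_swap f), <- (opp_RInt_swap g) by assumption.
    change (opp ?y) with (- y); rewrite !Rabs_Ropp, !Rabs_right; lra.
Qed.

(* Cauchy criterion: tails of [f] are controlled by those of the convergent [g]. *)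
Lemma ex_RInt_line_dominated (f g : R -> R) (lg : R) :
  (forall a b, ex_RInt f a b) -> (forall a b, ex_RInt g a b) -> (forall x, 0 <= f x <= g x) ->
  is_RInt_line g lg -> exists lf, is_RInt_line f lf.
Proof.
  intros Hf Hg Hfg Hlg; apply (is_RInt_line_iff g) in Hlg; [| exact Hg].
  cut (exists lf, filterlim (fun ab : R * R => RInt f (fst ab) (snd ab))
                   (filter_prod (Rbar_locally m_infty) (Rbar_locally p_infty)) (locally lf)).
  { intros [lf Hlf]; exists lf; apply is_RInt_line_iff; assumption. }
  apply (filterlim_locally_cauchy (F := filter_prod (Rbar_locally m_infty) (Rbar_locally p_infty))).
  intros eps.
  assert (Heps : 0 < eps / 4) by (generalize (cond_pos eps); lra).
  destruct (proj1 (filterlim_locally _ _) Hlg (mkposreal _ Heps)) as [Pa Pb [M1 HM1] [M2 HM2] HP].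
  assert (Hclose : forall u v, u < M1 -> M2 < v -> Rabs (RInt g u v - lg) < eps / 4)
    by (intros u v Hu Hv; exact (HP u v (HM1 u Hu) (HM2 v Hv))).
  exists (fun ab => fst ab < M1 /\ M2 < snd ab); split; [apply filter_prod_infty |].
  intros [a b] [a' b'] [Ha Hb] [Ha' Hb']; simpl in *; apply ball_R.
  replace (RInt f a' b' - RInt f a b) with (RInt f a' a + RInt f b b').
  2: { rewrite <- (RInt_Chasles_R f a' a b'), <- (RInt_Chasles_R f a b b') by apply Hf; ring. }
  assert (Hleft : Rabs (RInt g a' a) < eps / 2).
  { replace (RInt g a' a) with ((RInt g a' b - lg) - (RInt g a b - lg)).
    - eapply Rle_lt_trans; [apply Rabs_triang |]; rewrite Rabs_Ropp.
      generalize (Hclose a' b Ha' Hb) (Hclose a b Ha Hb); lra.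
    - rewrite <- (RInt_Chasles_R g a' a b) by apply Hg; ring. }
  assert (Hright : Rabs (RInt g b b') < eps / 2).
  { replace (RInt g b b') with ((RInt g a b' - lg) - (RInt g a b - lg)).
    - eapply Rle_lt_trans; [apply Rabs_triang |]; rewrite Rabs_Ropp.
      generalize (Hclose a b' Ha Hb') (Hclose a b Ha Hb); lra.
    - rewrite <- (RInt_Chasles_R g a b b') by apply Hg; ring. }
  eapply Rle_lt_trans; [apply Rabs_triang |].
  generalize (Rabs_RInt_le_Rabs_RInt f g a' a (Hf _ _) (Hg _ _) Hfg)
             (Rabs_RInt_le_Rabs_RInt f g b b' (Hf _ _) (Hg _ _) Hfg); lra.
Qed.

(** * A Gaussian Laplace transform *)

Lemma gauss_expect_eq (f : R -> R) (l : R) :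
  is_RInt_line (fun x => f x * normal_pdf x) l -> gauss_expect f = l.
Proof. apply (is_RInt_gen_unique (V := R_CompleteNormedModule)). Qed.

Lemma exp_neg_le_taylor2 y : 0 <= y -> exp (- y) <= 1 - y + y ^ 2 / 2.
Proof.
  intros Hy.
  destruct (MVT_gen (fun t => exp t * (1 - t + t ^ 2 / 2)) 0 y (fun t => exp t * t ^ 2 / 2))
    as [c [Hc E]].
  - intros; auto_derive; [exact I | field].
  - intros; apply continuity_pt_filterlim.
    apply (continuous_of_ex_derive (fun t => exp t * (1 - t + t ^ 2 / 2))).
    auto_derive; exact I.
  - rewrite Rmin_left, Rmax_right in Hc by lra; rewrite exp_0 in E.
    assert (0 <= exp c * c ^ 2 / 2 * (y - 0))
      by (apply Rmult_le_pos; [generalize (exp_pos c) (pow2_ge_0 c); intros; unfold Rdiv; nra | lra]).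
    rewrite exp_Ropp; apply (Rmult_le_reg_l (exp y)); [apply exp_pos |].
    rewrite Rinv_r by (apply Rgt_not_eq, exp_pos); lra.
Qed.

Lemma exp_neg_ge_tangent m y : exp (- m) * (1 + m - y) <= exp (- y).
Proof.
  replace (exp (- y)) with (exp (- m) * exp (m - y)) by (rewrite <- exp_plus; f_equal; ring).
  apply Rmult_le_compat_l; [apply Rlt_le, exp_pos |].
  generalize (exp_ineq1_le (m - y)); lra.
Qed.

Section GaussLaplace.

Variables c s : R.
Hypothesis hc : 0 <= c.

Let Y x := c * exp_remainder s x.
Let Z := gauss_expect (fun x => exp (- c * exp_remainder s x)).

Lemma scaled_exp_remainder_nonneg x : 0 <= Y x.
Proof. apply Rmult_le_pos; [exact hc | apply exp_remainder_nonneg]. Qed.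

Lemma is_RInt_line_scaled_exp_remainder :
  is_RInt_line (fun x => Y x * normal_pdf x) (c * (exp (s ^ 2 / 2) - 1)).
Proof.
  apply (is_RInt_line_ext (fun x => c * (exp_remainder s x * normal_pdf x)));
    [intros; unfold Y; ring |].
  apply is_RInt_line_scal, is_RInt_line_exp_remainder.
Qed.

Lemma is_RInt_line_sq_scaled_exp_remainder :
  is_RInt_line (fun x => Y x ^ 2 * normal_pdf x) (c ^ 2 * exp_remainder_moment2 s).
Proof.
  apply (is_RInt_line_ext (fun x => c ^ 2 * (exp_remainder s x ^ 2 * normal_pdf x)));
    [intros; unfold Y; ring |].
  apply is_RInt_line_scal, is_RInt_line_sq_exp_remainder.
Qed.

Lemma exp_neg_scaled_exp_remainder x : exp (- c * exp_remainder s x) = exp (- Y x).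
Proof. unfold Y; f_equal; ring. Qed.

Lemma exp_neg_scaled_exp_remainder_le_1 x : exp (- c * exp_remainder s x) <= 1.
Proof.
  rewrite exp_neg_scaled_exp_remainder, <- exp_0; apply exp_le_compat.
  generalize (scaled_exp_remainder_nonneg x); lra.
Qed.

Lemma is_RInt_line_gauss_laplace :
  is_RInt_line (fun x => exp (- c * exp_remainder s x) * normal_pdf x) Z.
Proof.
  assert (Hcont : forall x, continuous (fun x => exp (- c * exp_remainder s x) * normal_pdf x) x).
  { intros; apply continuous_of_ex_derive; unfold exp_remainder, normal_pdf; auto_derive; exact I. }
  destruct (ex_RInt_line_dominated (fun x => exp (- c * exp_remainder s x) * normal_pdf x)
              normal_pdf 1) as [l Hl].
  - intros; apply ex_RInt_of_continuous, Hcont.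
  - intros; apply ex_RInt_of_continuous, continuous_normal_pdf.
  - intros x; generalize (normal_pdf_pos x) (exp_pos (- c * exp_remainder s x))
                         (exp_neg_scaled_exp_remainder_le_1 x); split; nra.
  - apply is_RInt_line_normal_pdf.
  - replace Z with l; [exact Hl |].
    symmetry; apply gauss_expect_eq, Hl.
Qed.

Lemma gauss_laplace_le_1 : Z <= 1.
Proof.
  refine (is_RInt_line_le _ _ _ _ _ is_RInt_line_gauss_laplace is_RInt_line_normal_pdf).
  intros x; generalize (normal_pdf_pos x) (exp_neg_scaled_exp_remainder_le_1 x); nra.
Qed.

Lemma exp_neg_mean_le_gauss_laplace : exp (- (c * (exp (s ^ 2 / 2) - 1))) <= Z.
Proof.
  set (m := c * (exp (s ^ 2 / 2) - 1)).
  refine (is_RInt_line_le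
            (fun x => exp (- m) * ((1 + m) * normal_pdf x + -1 * (Y x * normal_pdf x))) _ _ _ _
            _ is_RInt_line_gauss_laplace).
  - intros x; rewrite exp_neg_scaled_exp_remainder.
    generalize (normal_pdf_pos x) (exp_neg_ge_tangent m (Y x)); nra.
  - apply (is_RInt_line_eq _ (exp (- m) * ((1 + m) * 1 + -1 * m))); [| ring].
    apply is_RInt_line_scal, is_RInt_line_plus;
      apply is_RInt_line_scal;
      [apply is_RInt_line_normal_pdf | apply is_RInt_line_scaled_exp_remainder].
Qed.

Lemma gauss_laplace_le_taylor2 :
  Z <= 1 - c * (exp (s ^ 2 / 2) - 1) + c ^ 2 * exp_remainder_moment2 s / 2.
Proof.
  refine (is_RInt_line_le _
            (fun x => normal_pdf x + -1 * (Y x * normal_pdf x) + / 2 * (Y x ^ 2 * normal_pdf x))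
            _ _ _ is_RInt_line_gauss_laplace _).
  - intros x; rewrite exp_neg_scaled_exp_remainder.
    generalize (normal_pdf_pos x) (exp_neg_le_taylor2 (Y x) (scaled_exp_remainder_nonneg x)); nra.
  - apply (is_RInt_line_eq _ (1 + -1 * (c * (exp (s ^ 2 / 2) - 1))
                               + / 2 * (c ^ 2 * exp_remainder_moment2 s))); [| field].
    apply is_RInt_line_plus; [apply is_RInt_line_plus |].
    + apply is_RInt_line_normal_pdf.
    + apply is_RInt_line_scal, is_RInt_line_scaled_exp_remainder.
    + apply is_RInt_line_scal, is_RInt_line_sq_scaled_exp_remainder.
Qed.

Lemma neg_ln_gauss_laplace_bounds :
  Rmax (c * (exp (s ^ 2 / 2) - 1) - c ^ 2 * exp_remainder_moment2 s / 2) 0 <= - ln Z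
  /\ - ln Z <= c * (exp (s ^ 2 / 2) - 1).
Proof.
  assert (Hpos : 0 < Z)
    by (eapply Rlt_le_trans; [apply exp_pos | apply exp_neg_mean_le_gauss_laplace]).
  assert (Hle1 := gauss_laplace_le_1).
  assert (Hlow := exp_neg_mean_le_gauss_laplace).
  assert (Hup := gauss_laplace_le_taylor2).
  assert (Hln_le : ln Z <= Z - 1) by (generalize (exp_ineq1_le (ln Z)); rewrite exp_ln; lra).
  assert (Hln_nonpos : ln Z <= 0) by (rewrite <- ln_1; apply ln_le; lra).
  assert (Hln_ge : - (c * (exp (s ^ 2 / 2) - 1)) <= ln Z)
    by (rewrite <- (ln_exp (- _)); apply ln_le; [apply exp_pos | exact Hlow]).
  split; [apply Rmax_lub |]; lra.
Qed.

End GaussLaplace.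

(** * The Lambert function *)

Lemma mul_exp_lt a b : 0 <= a -> a < b -> a * exp a < b * exp b.
Proof. intros Ha Hab; generalize (exp_increasing a b Hab) (exp_pos a); nra. Qed.

Lemma LambertW_spec x : 0 < x -> 0 < LambertW x /\ LambertW x * exp (LambertW x) = x.
Proof.
  intros Hx.
  assert (Hex : exists y, -1 < y /\ y * exp y = x).
  { destruct (IVT (fun y => y * exp y - x) 0 x) as [y [Hy Ey]].
    - apply continuity_minus; [| apply continuity_const; intros ? ?; reflexivity].
      apply continuity_mult; apply derivable_continuous; [apply derivable_id | apply derivable_exp].
    - exact Hx.
    - rewrite exp_0; lra.
    - generalize (exp_ineq1_le x); nra.
    - exists y; split; lra. }
  destruct (epsilon_spec (inhabits 0) (fun y => -1 < y /\ y * exp y = x) Hex) as [H1 H2].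
  fold (LambertW x) in H1, H2; split; [generalize (exp_pos (LambertW x)); nra | exact H2].
Qed.

Lemma LambertW_le x : 0 < x -> LambertW x <= x.
Proof.
  intros Hx; destruct (LambertW_spec x Hx) as [Hw Hwx].
  generalize (exp_ineq1_le (LambertW x)); nra.
Qed.

Lemma LambertW_mul_exp y : 0 < y -> LambertW (y * exp y) = y.
Proof.
  intros Hy; assert (Hx : 0 < y * exp y) by (generalize (exp_pos y); nra).
  destruct (LambertW_spec _ Hx) as [Hw Hwx].
  destruct (Rtotal_order (LambertW (y * exp y)) y) as [Hlt | [Heq | Hgt]]; [| exact Heq |].
  - generalize (mul_exp_lt _ _ (Rlt_le _ _ Hw) Hlt); lra.
  - generalize (mul_exp_lt _ _ (Rlt_le _ _ Hy) Hgt); lra.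
Qed.

Lemma LambertW_le_compat x y : 0 < x -> x <= y -> LambertW x <= LambertW y.
Proof.
  intros Hx Hxy; destruct (LambertW_spec x Hx) as [Hwx Ex], (LambertW_spec y ltac:(lra)) as [Hwy Ey].
  destruct (Rle_lt_dec (LambertW x) (LambertW y)) as [| Hlt]; [assumption |].
  generalize (mul_exp_lt _ _ (Rlt_le _ _ Hwy) Hlt); lra.
Qed.

(* Inverse function theorem for [y |-> y e^y] on [[W x / 2, W x + 1]]. *)
Lemma is_derive_LambertW x :
  0 < x -> is_derive LambertW x (/ ((1 + LambertW x) * exp (LambertW x))).
Proof.
  intros Hx; set (f := fun y => y * exp y).
  assert (Hf' : forall y, derivable_pt_lim f y ((1 + y) * exp y))
    by (intros; apply is_derive_Reals; unfold f; auto_derive; [exact I | ring]).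
  destruct (LambertW_spec x Hx) as [Hw Hwx]; set (w := LambertW x) in *.
  set (lb := w / 2); set (ub := w + 1).
  assert (Hfpos : 0 < f lb) by (unfold f, lb; generalize (exp_pos (w / 2)); nra).
  assert (Hxin : f lb < x < f ub) by (rewrite <- Hwx; split; apply mul_exp_lt; unfold lb, ub; lra).
  assert (Hends : LambertW (f lb) = lb /\ LambertW (f ub) = ub)
    by (split; apply LambertW_mul_exp; unfold lb, ub; lra).
  assert (Hrange : forall z, f lb <= z -> z <= f ub -> lb <= LambertW z <= ub).
  { intros z H1 H2; destruct Hends as [E1 E2].
    split; [rewrite <- E1 | rewrite <- E2]; apply LambertW_le_compat; lra. }
  assert (Hinv : forall z, f lb <= z -> z <= f ub -> comp f LambertW z = id z)
    by (intros z H1 H2; unfold comp, id; apply LambertW_spec; lra).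
  assert (Hcont : continuity_pt LambertW x).
  { apply (continuity_pt_recip_interv f LambertW lb ub); try assumption.
    - unfold lb, ub; lra.
    - intros; apply mul_exp_lt; unfold lb in *; lra.
    - intros; apply derivable_continuous_pt; exists ((1 + a) * exp a); apply Hf'. }
  assert (Hwin : LambertW (f lb) <= LambertW x <= LambertW (f ub))
    by (destruct Hends as [-> ->]; apply Hrange; lra).
  pose (Prf := fun a (_ : LambertW (f lb) <= a <= LambertW (f ub)) =>
                 exist (fun l => derivable_pt_lim f a l) _ (Hf' a)).
  assert (H := derivable_pt_lim_recip_interv f LambertW (f lb) (f ub) x Prf Hcont
                 ltac:(lra) Hxin Hwin (fun z Hz => Hinv z (proj1 Hz) (proj2 Hz))).
  apply is_derive_Reals; replace (/ ((1 + w) * exp w)) with (1 / ((1 + w) * exp w)) by apply Rmult_1_l.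
  apply H; change ((1 + w) * exp w <> 0); generalize (exp_pos w); nra.
Qed.

Lemma continuous_LambertW x : 0 < x -> continuous LambertW x.
Proof. intros Hx; apply continuous_of_ex_derive; eexists; apply is_derive_LambertW, Hx. Qed.

(** * Local C^1 calculus *)

Definition C1_at (f : R -> R) (x : R) : Prop :=
  exists f', locally x (fun y => is_derive f y (f' y)) /\ continuous f' x.

Lemma C1_on_of_C1_at (f : R -> R) a b : (forall x, a < x < b -> C1_at f x) -> C1_on f a b.
Proof.
  intros Hf x Hx; destruct (Hf x Hx) as [f' [Hd Hc]]; split.
  - eexists; apply (locally_singleton _ _ Hd).
  - apply (continuous_ext_loc _ f'); [| exact Hc].
    apply locally_locally in Hd; revert Hd; apply filter_imp; intros y Hy.
    symmetry; apply is_derive_unique, (locally_singleton _ _ Hy).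
Qed.

Lemma C1_at_continuous (f : R -> R) x : C1_at f x -> continuous f x.
Proof.
  intros [f' [Hd _]]; apply continuous_of_ex_derive; eexists; apply (locally_singleton _ _ Hd).
Qed.

Lemma C1_at_smooth (f f' : R -> R) x :
  (forall y, is_derive f y (f' y)) -> (forall y, continuous f' y) -> C1_at f x.
Proof. intros Hd Hc; exists f'; split; [apply filter_forall, Hd | apply Hc]. Qed.

Lemma C1_at_const (k x : R) : C1_at (fun _ => k) x.
Proof.
  apply (C1_at_smooth _ (fun _ => 0)); [intros; auto_derive; auto | intros; apply continuous_const].
Qed.

Lemma C1_at_plus (f g : R -> R) x : C1_at f x -> C1_at g x -> C1_at (fun y => f y + g y) x.
Proof.
  intros [f' [Hf Cf]] [g' [Hg Cg]]; exists (fun y => f' y + g' y); split.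
  - generalize (filter_and _ _ Hf Hg); apply filter_imp; intros y [Hfy Hgy].
    apply (is_derive_plus f g); assumption.
  - apply (continuous_plus f' g'); assumption.
Qed.

Lemma C1_at_mult (f g : R -> R) x : C1_at f x -> C1_at g x -> C1_at (fun y => f y * g y) x.
Proof.
  intros HfC HgC; generalize (C1_at_continuous f x HfC) (C1_at_continuous g x HgC); intros Cf0 Cg0.
  destruct HfC as [f' [Hf Cf]], HgC as [g' [Hg Cg]].
  exists (fun y => f' y * g y + f y * g' y); split.
  - generalize (filter_and _ _ Hf Hg); apply filter_imp; intros y [Hfy Hgy].
    eapply is_derive_eq; [apply (is_derive_mult f g); [exact Hfy | exact Hgy | apply Rmult_comm] |].
    unfold plus, mult; simpl; ring.
  - apply (continuous_plus (fun y => f' y * g y));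
      apply (continuous_mult (K := R_AbsRing)); assumption.
Qed.

Lemma C1_at_inv (f : R -> R) x : C1_at f x -> f x <> 0 -> C1_at (fun y => / f y) x.
Proof.
  intros HfC Hfx; generalize (C1_at_continuous f x HfC); intros Cf0.
  destruct HfC as [f' [Hf Cf]].
  exists (fun y => - f' y * / (f y * f y)); split.
  - assert (Hnz : locally x (fun y => f y <> 0)).
    { apply (Cf0 (fun z => z <> 0)); exists (mkposreal _ (Rabs_pos_lt _ Hfx)); intros z Hz Hz0.
      rewrite Hz0 in Hz; change (Rabs (0 - f x) < Rabs (f x)) in Hz.
      rewrite Rminus_0_l, Rabs_Ropp in Hz; lra. }
    generalize (filter_and _ _ Hf Hnz); apply filter_imp; intros y [Hfy Hy].
    eapply is_derive_eq; [apply (is_derive_inv f); [exact Hfy | exact Hy] |].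
    field; exact Hy.
  - apply (continuous_mult (K := R_AbsRing) (fun y => - f' y)).
    + apply (continuous_opp f'), Cf.
    + apply continuous_Rinv_comp; [| apply Rmult_integral_contrapositive; tauto].
      apply (continuous_mult (K := R_AbsRing)); exact Cf0.
Qed.

Lemma C1_at_comp (f g : R -> R) x : C1_at f x -> C1_at g (f x) -> C1_at (fun y => g (f y)) x.
Proof.
  intros HfC [g' [Hg Cg]]; generalize (C1_at_continuous f x HfC); intros Cf0.
  destruct HfC as [f' [Hf Cf]].
  exists (fun y => f' y * g' (f y)); split.
  - generalize (filter_and _ _ Hf (Cf0 _ Hg)); apply filter_imp; intros y [Hfy Hgy].
    apply (is_derive_comp g f); assumption.
  - apply (continuous_mult (K := R_AbsRing) f'); [exact Cf |].
    apply (continuous_comp f g'); assumption.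
Qed.

Lemma C1_at_LambertW x : 0 < x -> C1_at LambertW x.
Proof.
  intros Hx; exists (fun y => / ((1 + LambertW y) * exp (LambertW y))); split.
  - apply (locally_interval _ x 0 p_infty); [exact Hx | exact I |].
    intros y Hy _; apply is_derive_LambertW, Hy.
  - apply continuous_Rinv_comp; [| generalize (LambertW_spec x Hx) (exp_pos (LambertW x)); nra].
    apply (continuous_mult (K := R_AbsRing)).
    + apply (continuous_plus (fun _ => 1)); [apply continuous_const | apply continuous_LambertW, Hx].
    + apply (continuous_comp LambertW exp); [apply continuous_LambertW, Hx | apply continuous_exp].
Qed.

(** * The functions of the model *)

Section Model.

Variables T r nu mu eta sigma s0 lam gam : R.
Hypotheses (hT : 0 < T) (heta : 0 < eta) (hs0 : 0 < s0) (hlam : 0 < lam) (hgam : 0 < gam).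

Let w := wfun T nu mu r eta sigma s0 lam gam.
Let d := dfun T nu mu r eta sigma s0 lam gam.
Let b := bfun T nu mu r eta sigma s0 lam gam.

(* [wfun rho = LambertW (lambert_coef rho * theta rho)]. *)
Definition lambert_coef (rho : R) :=
  s0 * eta ^ 2 * T * exp ((nu - eta * rho * ((mu - r) / sigma) - eta ^ 2 / 2) * T).

Definition d_prefactor := lam * exp (- r * T) / (eta ^ 2 * T).

Lemma eta2T_pos : 0 < eta ^ 2 * T.
Proof. apply Rmult_lt_0_compat; [apply pow_lt |]; assumption. Qed.

Lemma d_prefactor_pos : 0 < d_prefactor.
Proof.
  apply Rdiv_lt_0_compat; [apply Rmult_lt_0_compat; [exact hlam | apply exp_pos] | apply eta2T_pos].
Qed.

Lemma theta_pos rho : -1 < rho < 1 -> 0 < theta lam gam rho.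
Proof. intros; unfold theta; apply Rmult_lt_0_compat; [nra | nra]. Qed.

Lemma lambert_coef_pos rho : 0 < lambert_coef rho.
Proof.
  unfold lambert_coef; apply Rmult_lt_0_compat; [| apply exp_pos].
  rewrite Rmult_assoc; apply Rmult_lt_0_compat; [exact hs0 | apply eta2T_pos].
Qed.

Lemma lambert_arg_pos rho : -1 < rho < 1 -> 0 < lambert_coef rho * theta lam gam rho.
Proof. intros; apply Rmult_lt_0_compat; [apply lambert_coef_pos | apply theta_pos; assumption]. Qed.

Lemma wfun_spec rho : -1 < rho < 1 ->
  0 < w rho /\ w rho * exp (w rho) = lambert_coef rho * theta lam gam rho.
Proof. intros; apply LambertW_spec, lambert_arg_pos; assumption. Qed.

Lemma wfun_le rho : -1 < rho < 1 -> w rho <= lambert_coef rho * theta lam gam rho.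
Proof. intros; apply LambertW_le, lambert_arg_pos; assumption. Qed.

(* This removes the factor [1 / theta], singular at [rho = -1, 1]. *)
Lemma wfun_div_theta rho : -1 < rho < 1 ->
  w rho / theta lam gam rho = lambert_coef rho * exp (- w rho).
Proof.
  intros Hrho; destruct (wfun_spec rho Hrho) as [_ Hw].
  assert (Ht := theta_pos rho Hrho).
  rewrite exp_Ropp; apply (Rmult_eq_reg_r (theta lam gam rho * exp (w rho)));
    [| generalize (exp_pos (w rho)); nra].
  field_simplify; [rewrite Hw; ring | generalize (exp_pos (w rho)); lra | lra].
Qed.

Lemma dfun_eq rho : -1 < rho < 1 ->
  d rho = d_prefactor * lambert_coef rho * (exp (- w rho) * (1 + w rho / 2)).
Proof.
  intros Hrho; assert (Ht := theta_pos rho Hrho); assert (He := eta2T_pos).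
  unfold d, dfun; fold (w rho).
  replace (d_prefactor * lambert_coef rho * (exp (- w rho) * (1 + w rho / 2)))
    with (d_prefactor * (lambert_coef rho * exp (- w rho)) * (1 + w rho / 2)) by ring.
  rewrite <- wfun_div_theta by exact Hrho; unfold d_prefactor; field; lra.
Qed.

Lemma bfun_eq rho : -1 < rho < 1 ->
  b rho = d_prefactor * lambert_coef rho * (exp (- w rho) * (exp (eta ^ 2 / 2 * T) - 1)).
Proof.
  intros Hrho; assert (Ht := theta_pos rho Hrho); assert (He := eta2T_pos).
  unfold b, bfun; fold (w rho).
  replace (d_prefactor * lambert_coef rho * (exp (- w rho) * (exp (eta ^ 2 / 2 * T) - 1)))
    with (d_prefactor * (lambert_coef rho * exp (- w rho)) * (exp (eta ^ 2 / 2 * T) - 1)) by ring.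
  rewrite <- wfun_div_theta by exact Hrho; unfold d_prefactor; field; lra.
Qed.

Lemma C1_at_lambert_coef rho : C1_at lambert_coef rho.
Proof.
  apply (C1_at_smooth _ (fun rho => - eta * ((mu - r) / sigma) * T * lambert_coef rho)).
  - intros; unfold lambert_coef; auto_derive; [exact I | unfold Rminus; simpl; ring].
  - intros; apply continuous_of_ex_derive; unfold lambert_coef; auto_derive; exact I.
Qed.

Lemma C1_at_theta rho : C1_at (theta lam gam) rho.
Proof.
  apply (C1_at_smooth _ (fun rho => lam * gam * (-2 * rho))).
  - intros; unfold theta; auto_derive; [exact I | ring].
  - intros; apply continuous_of_ex_derive; auto_derive; exact I.
Qed.

Lemma C1_at_wfun rho : -1 < rho < 1 -> C1_at w rho.
Proof.
  intros Hrho; change (C1_at (fun rho => LambertW (lambert_coef rho * theta lam gam rho)) rho).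
  apply (C1_at_comp (fun rho => lambert_coef rho * theta lam gam rho) LambertW).
  - apply C1_at_mult; [apply C1_at_lambert_coef | apply C1_at_theta].
  - apply C1_at_LambertW, lambert_arg_pos, Hrho.
Qed.

Lemma C1_at_dfun rho : -1 < rho < 1 -> C1_at d rho.
Proof.
  intros Hrho; assert (Ht := theta_pos rho Hrho); assert (He := eta2T_pos).
  change (C1_at (fun rho => lam * exp (- r * T) * / (theta lam gam rho * eta ^ 2 * T) * w rho
                            * (1 + w rho * / 2)) rho).
  apply C1_at_mult; [apply C1_at_mult; [apply C1_at_mult |] |].
  - apply C1_at_const.
  - apply C1_at_inv; [| nra].
    apply C1_at_mult; [apply C1_at_mult; [apply C1_at_theta |] |]; apply C1_at_const.
  - apply C1_at_wfun, Hrho.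
  - apply C1_at_plus; [apply C1_at_const |].
    apply C1_at_mult; [apply C1_at_wfun, Hrho | apply C1_at_const].
Qed.

Lemma C1_at_bfun rho : -1 < rho < 1 -> C1_at b rho.
Proof.
  intros Hrho; assert (Ht := theta_pos rho Hrho).
  change (C1_at (fun rho => lam * exp (- r * T) * / theta lam gam rho * (w rho * / (eta ^ 2 * T))
                            * (exp (eta ^ 2 / 2 * T) - 1)) rho).
  apply C1_at_mult; [apply C1_at_mult; [apply C1_at_mult |] | apply C1_at_const].
  - apply C1_at_const.
  - apply C1_at_inv; [apply C1_at_theta | lra].
  - apply C1_at_mult; [apply C1_at_wfun, Hrho | apply C1_at_const].
Qed.

Lemma exp_variance_factor_pos : 0 < exp (eta ^ 2 / 2 * T) - 1.
Proof.
  assert (H : 0 < eta ^ 2 / 2 * T) by (generalize eta2T_pos; lra).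
  generalize (exp_ineq1 _ (Rgt_not_eq _ _ H)); lra.
Qed.

Lemma dfun_pos rho : -1 < rho < 1 -> 0 < d rho.
Proof.
  intros Hrho; rewrite dfun_eq by exact Hrho.
  generalize d_prefactor_pos (lambert_coef_pos rho) (exp_pos (- w rho)) (proj1 (wfun_spec rho Hrho)).
  intros; apply Rmult_lt_0_compat; [nra | apply Rmult_lt_0_compat; lra].
Qed.

Lemma bfun_pos rho : -1 < rho < 1 -> 0 < b rho.
Proof.
  intros Hrho; rewrite bfun_eq by exact Hrho.
  generalize d_prefactor_pos (lambert_coef_pos rho) (exp_pos (- w rho)) exp_variance_factor_pos.
  intros; apply Rmult_lt_0_compat; [nra | apply Rmult_lt_0_compat; lra].
Qed.

Definition lambert_coef_max := s0 * eta ^ 2 * T * exp ((nu + eta * Rabs ((mu - r) / sigma)) * T).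

Lemma lambert_coef_le rho : -1 < rho < 1 -> lambert_coef rho <= lambert_coef_max.
Proof.
  intros Hrho; unfold lambert_coef, lambert_coef_max.
  apply Rmult_le_compat_l; [rewrite Rmult_assoc; generalize eta2T_pos; nra |].
  apply exp_le_compat, Rmult_le_compat_r; [lra |].
  assert (- (rho * ((mu - r) / sigma)) <= Rabs ((mu - r) / sigma)).
  { eapply Rle_trans; [apply Rle_abs |]. rewrite Rabs_Ropp, Rabs_mult.
    generalize (Rabs_pos ((mu - r) / sigma)); assert (Rabs rho <= 1) by (apply Rabs_le; lra); nra. }
  generalize (pow2_ge_0 eta); nra.
Qed.

Lemma exp_neg_mul_one_plus_half_le_1 u : 0 <= u -> exp (- u) * (1 + u / 2) <= 1.
Proof.
  intros Hu; rewrite exp_Ropp; apply (Rmult_le_reg_l (exp u)); [apply exp_pos |].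
  rewrite <- Rmult_assoc, Rinv_r, Rmult_1_l, Rmult_1_r by (apply Rgt_not_eq, exp_pos).
  generalize (exp_ineq1_le u); lra.
Qed.

Lemma dfun_le rho : -1 < rho < 1 -> d rho <= d_prefactor * lambert_coef_max.
Proof.
  intros Hrho; rewrite dfun_eq by exact Hrho.
  generalize d_prefactor_pos (lambert_coef_pos rho) (lambert_coef_le rho Hrho) (exp_pos (- w rho))
             (exp_neg_mul_one_plus_half_le_1 (w rho) (Rlt_le _ _ (proj1 (wfun_spec rho Hrho)))).
  intros; apply Rle_trans with (d_prefactor * lambert_coef rho); [| apply Rmult_le_compat_l; lra].
  rewrite <- (Rmult_1_r (d_prefactor * lambert_coef rho)) at 2; apply Rmult_le_compat_l; nra.
Qed.

Lemma bfun_le rho : -1 < rho < 1 ->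
  b rho <= d_prefactor * lambert_coef_max * (exp (eta ^ 2 / 2 * T) - 1).
Proof.
  intros Hrho; rewrite bfun_eq by exact Hrho.
  assert (He : exp (- w rho) <= 1)
    by (rewrite <- exp_0; apply exp_le_compat; generalize (wfun_spec rho Hrho); lra).
  generalize d_prefactor_pos (lambert_coef_pos rho) (lambert_coef_le rho Hrho) exp_variance_factor_pos.
  intros; apply Rle_trans with (d_prefactor * lambert_coef rho * (1 * (exp (eta ^ 2 / 2 * T) - 1))).
  - apply Rmult_le_compat_l; [nra | apply Rmult_le_compat_r; lra].
  - rewrite Rmult_1_l; apply Rmult_le_compat_r; [lra | apply Rmult_le_compat_l; lra].
Qed.

Lemma continuous_lambert_coef rho : continuous lambert_coef rho.
Proof. apply continuous_of_ex_derive; unfold lambert_coef; auto_derive; exact I. Qed.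

Section Boundary.

Variables (F : (R -> Prop) -> Prop) (rho0 : R).
Context {FF : Filter F}.
Hypotheses (hinside : F (fun rho => -1 < rho < 1))
           (hto : filterlim (fun rho => rho) F (locally rho0)) (htheta : theta lam gam rho0 = 0).

Lemma filterlim_wfun_boundary : filterlim w F (locally 0).
Proof.
  apply (filterlim_le_le (fun _ => 0) w (fun rho => lambert_coef rho * theta lam gam rho) (Finite 0)).
  - revert hinside; apply filter_imp; intros rho Hrho.
    split; [apply Rlt_le, wfun_spec, Hrho | apply wfun_le, Hrho].
  - apply filterlim_const.
  - rewrite <- (Rmult_0_r (lambert_coef rho0)), <- htheta.
    apply (filterlim_continuous_comp _ (fun rho => lambert_coef rho * theta lam gam rho) _ hto).
    apply continuous_of_ex_derive; unfold lambert_coef, theta; auto_derive; exact I.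
Qed.

Lemma filterlim_exp_neg_wfun_boundary : filterlim (fun rho => exp (- w rho)) F (locally 1).
Proof.
  rewrite <- exp_0, <- Ropp_0.
  apply (filterlim_continuous_comp _ (fun u => exp (- u)) _ filterlim_wfun_boundary).
  apply continuous_of_ex_derive; auto_derive; exact I.
Qed.

Lemma filterlim_dfun_boundary : filterlim d F (locally (d_prefactor * lambert_coef rho0)).
Proof.
  apply (filterlim_ext_loc
           (fun rho => d_prefactor * lambert_coef rho * (exp (- w rho) * (1 + w rho / 2)))).
  { revert hinside; apply filter_imp; intros; symmetry; apply dfun_eq; assumption. }
  replace (d_prefactor * lambert_coef rho0)
    with (d_prefactor * lambert_coef rho0 * (1 * (1 + 0 / 2))) by field.
  apply filterlim_Rmult; [apply filterlim_Rmult; [apply filterlim_const |] | apply filterlim_Rmult].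
  - apply (filterlim_continuous_comp _ lambert_coef _ hto), continuous_lambert_coef.
  - apply filterlim_exp_neg_wfun_boundary.
  - apply (filterlim_continuous_comp _ (fun u => 1 + u / 2) _ filterlim_wfun_boundary).
    apply continuous_of_ex_derive; auto_derive; exact I.
Qed.

Lemma filterlim_bfun_boundary :
  filterlim b F (locally (d_prefactor * lambert_coef rho0 * (exp (eta ^ 2 / 2 * T) - 1))).
Proof.
  apply (filterlim_ext_loc
           (fun rho => d_prefactor * lambert_coef rho
                       * (exp (- w rho) * (exp (eta ^ 2 / 2 * T) - 1)))).
  { revert hinside; apply filter_imp; intros; symmetry; apply bfun_eq; assumption. }
  replace (d_prefactor * lambert_coef rho0 * (exp (eta ^ 2 / 2 * T) - 1))
    with (d_prefactor * lambert_coef rho0 * (1 * (exp (eta ^ 2 / 2 * T) - 1))) by ring.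
  apply filterlim_Rmult; [apply filterlim_Rmult; [apply filterlim_const |] | apply filterlim_Rmult].
  - apply (filterlim_continuous_comp _ lambert_coef _ hto), continuous_lambert_coef.
  - apply filterlim_exp_neg_wfun_boundary.
  - apply filterlim_const.
Qed.

Lemma filterlim_gfun_boundary :
  filterlim (gfun T nu mu r eta sigma s0 lam gam) F
    (locally (d_prefactor * lambert_coef rho0 * exp (eta ^ 2 / 2 * T))).
Proof.
  replace (d_prefactor * lambert_coef rho0 * exp (eta ^ 2 / 2 * T))
    with (d_prefactor * lambert_coef rho0
          + d_prefactor * lambert_coef rho0 * (exp (eta ^ 2 / 2 * T) - 1)) by ring.
  apply (filterlim_Rplus d b); [apply filterlim_dfun_boundary | apply filterlim_bfun_boundary].
Qed.

End Boundary.

Lemma d_prefactor_mul_lambert_coef rho :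
  d_prefactor * lambert_coef rho
  = lam * exp (- r * T) * s0 * exp ((nu - eta * rho * ((mu - r) / sigma) - eta ^ 2 / 2) * T).
Proof. assert (He := eta2T_pos); unfold d_prefactor, lambert_coef; field; lra. Qed.

Lemma afun_bounds rho : -1 < rho < 1 ->
  Rmax (b rho - lam * exp (- r * T) / theta lam gam rho * (w rho ^ 2 / (2 * eta ^ 4 * T ^ 2))
                * e2 T eta) 0
    <= afun T nu mu r eta sigma s0 lam gam rho
  /\ afun T nu mu r eta sigma s0 lam gam rho <= b rho.
Proof.
  intros Hrho; assert (He := eta2T_pos).
  set (K := lam * exp (- r * T) / theta lam gam rho).
  set (c := w rho / (eta ^ 2 * T)); set (s := eta * sqrt T).
  assert (HK : 0 < K)
    by (apply Rdiv_lt_0_compat; [apply Rmult_lt_0_compat; [exact hlam | apply exp_pos]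
                                | apply theta_pos, Hrho]).
  assert (Hc : 0 <= c) by (apply Rlt_le, Rdiv_lt_0_compat; [apply wfun_spec, Hrho | exact He]).
  assert (Hs2 : s ^ 2 = eta ^ 2 * T).
  { unfold s; rewrite Rpow_mult_distr, pow2_sqrt; lra. }
  assert (Ha : afun T nu mu r eta sigma s0 lam gam rho
               = K * - ln (gauss_expect (fun x => exp (- c * exp_remainder s x))))
    by (unfold afun; rewrite <- Ropp_mult_distr_l, Ropp_mult_distr_r; reflexivity).
  assert (Hb : b rho = K * (c * (exp (s ^ 2 / 2) - 1))).
  { unfold b, bfun; fold (w rho); fold K; fold c.
    rewrite Hs2; replace (eta ^ 2 * T / 2) with (eta ^ 2 / 2 * T) by field; ring. }
  assert (Hq : K * (w rho ^ 2 / (2 * eta ^ 4 * T ^ 2)) * e2 T eta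
               = K * (c ^ 2 * exp_remainder_moment2 s / 2)).
  { unfold exp_remainder_moment2, e2, c; rewrite Hs2.
    replace (2 * (eta ^ 2 * T)) with (2 * eta ^ 2 * T) by ring; field; lra. }
  destruct (neg_ln_gauss_laplace_bounds c s Hc) as [Hlow Hup].
  rewrite Ha, Hb; fold K; rewrite Hq; split.
  - rewrite <- Rmult_minus_distr_l, <- (Rmult_0_r K), <- Rmult_max_distr_l by lra.
    apply Rmult_le_compat_l; lra.
  - apply Rmult_le_compat_l; lra.
Qed.

Lemma C1_on_dfun : C1_on d (-1) 1.
Proof. apply C1_on_of_C1_at, C1_at_dfun. Qed.

Lemma C1_on_gfun : C1_on (gfun T nu mu r eta sigma s0 lam gam) (-1) 1.
Proof.
  apply C1_on_of_C1_at; intros rho Hrho.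
  apply (C1_at_plus d b); [apply C1_at_dfun | apply C1_at_bfun]; exact Hrho.
Qed.

Lemma gfun_pos rho : -1 < rho < 1 -> 0 < gfun T nu mu r eta sigma s0 lam gam rho.
Proof. intros Hrho; generalize (dfun_pos rho Hrho) (bfun_pos rho Hrho); unfold d, b, gfun; lra. Qed.

Lemma at_left_one_inside : at_left 1 (fun rho => -1 < rho < 1).
Proof.
  apply (locally_interval _ 1 0 2); [simpl; lra | simpl; lra |].
  intros y Hy0 Hy2 Hy1; simpl in *; lra.
Qed.

Lemma at_right_neg_one_inside : at_right (-1) (fun rho => -1 < rho < 1).
Proof.
  apply (locally_interval _ (-1) (-2) 0); [simpl; lra | simpl; lra |].
  intros y Hy0 Hy2 Hy1; simpl in *; lra.
Qed.

Lemma filterlim_id_within (D : R -> Prop) x :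
  filterlim (fun y => y) (within D (locally x)) (locally x).
Proof. apply (filterlim_filter_le_1 _ (filter_le_within _)), filterlim_id. Qed.

Lemma theta_one : theta lam gam 1 = 0.
Proof. unfold theta; ring. Qed.

Lemma theta_neg_one : theta lam gam (-1) = 0.
Proof. unfold theta; ring. Qed.

Lemma filterlim_dfun_at_left_1 :
  filterlim d (at_left 1)
    (locally (lam * exp (- r * T) * s0 * exp ((nu - eta * ((mu - r) / sigma) - eta ^ 2 / 2) * T))).
Proof.
  replace (nu - eta * ((mu - r) / sigma)) with (nu - eta * 1 * ((mu - r) / sigma)) by ring.
  rewrite <- d_prefactor_mul_lambert_coef.
  exact (filterlim_dfun_boundary (at_left 1) 1 at_left_one_inside (filterlim_id_within _ _) theta_one).
Qed.
Lemma filterlim_dfun_at_right_neg_1 :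
  filterlim d (at_right (-1))
    (locally (lam * exp (- r * T) * s0 * exp ((nu + eta * ((mu - r) / sigma) - eta ^ 2 / 2) * T))).
Proof.
  replace (nu + eta * ((mu - r) / sigma)) with (nu - eta * -1 * ((mu - r) / sigma)) by ring.
  rewrite <- d_prefactor_mul_lambert_coef.
  exact (filterlim_dfun_boundary (at_right (-1)) (-1) at_right_neg_one_inside
           (filterlim_id_within _ _) theta_neg_one).
Qed.

Lemma d_prefactor_mul_lambert_coef_exp rho :
  d_prefactor * lambert_coef rho * exp (eta ^ 2 / 2 * T)
  = lam * exp (- r * T) * s0 * exp ((nu - eta * rho * ((mu - r) / sigma)) * T).
Proof.
  rewrite d_prefactor_mul_lambert_coef, Rmult_assoc, <- exp_plus.
  do 2 f_equal; ring.
Qed.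

Lemma filterlim_gfun_at_left_1 :
  filterlim (gfun T nu mu r eta sigma s0 lam gam) (at_left 1)
    (locally (lam * exp (- r * T) * s0 * exp ((nu - eta * ((mu - r) / sigma)) * T))).
Proof.
  replace (nu - eta * ((mu - r) / sigma)) with (nu - eta * 1 * ((mu - r) / sigma)) by ring.
  rewrite <- d_prefactor_mul_lambert_coef_exp.
  exact (filterlim_gfun_boundary (at_left 1) 1 at_left_one_inside (filterlim_id_within _ _) theta_one).
Qed.

Lemma filterlim_gfun_at_right_neg_1 :
  filterlim (gfun T nu mu r eta sigma s0 lam gam) (at_right (-1))
    (locally (lam * exp (- r * T) * s0 * exp ((nu + eta * ((mu - r) / sigma)) * T))).
Proof.
  replace (nu + eta * ((mu - r) / sigma)) with (nu - eta * -1 * ((mu - r) / sigma)) by ring.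
  rewrite <- d_prefactor_mul_lambert_coef_exp.
  exact (filterlim_gfun_boundary (at_right (-1)) (-1) at_right_neg_one_inside
           (filterlim_id_within _ _) theta_neg_one).
Qed.

Lemma bounded_on_of_le (f : R -> R) M :
  (forall x, -1 < x < 1 -> 0 <= f x <= M) -> bounded_on f (-1) 1.
Proof. intros Hf; exists M; intros x Hx; rewrite Rabs_right; apply Hf in Hx; lra. Qed.

Lemma bounded_on_dfun : bounded_on d (-1) 1.
Proof.
  apply (bounded_on_of_le _ (d_prefactor * lambert_coef_max)); intros rho Hrho.
  split; [apply Rlt_le, dfun_pos | apply dfun_le]; exact Hrho.
Qed.

Lemma bounded_on_bfun : bounded_on b (-1) 1.
Proof.
  apply (bounded_on_of_le _ (d_prefactor * lambert_coef_max * (exp (eta ^ 2 / 2 * T) - 1))).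
  intros rho Hrho.
  split; [apply Rlt_le, bfun_pos | apply bfun_le]; exact Hrho.
Qed.

Lemma bounded_on_gfun : bounded_on (gfun T nu mu r eta sigma s0 lam gam) (-1) 1.
Proof.
  apply (bounded_on_of_le _ (d_prefactor * lambert_coef_max
                            + d_prefactor * lambert_coef_max * (exp (eta ^ 2 / 2 * T) - 1))).
  intros rho Hrho; generalize (dfun_pos rho Hrho) (dfun_le rho Hrho) (bfun_pos rho Hrho)
                             (bfun_le rho Hrho); unfold d, b, gfun; lra.
Qed.

Lemma bounded_on_afun : bounded_on (afun T nu mu r eta sigma s0 lam gam) (-1) 1.
Proof.
  apply (bounded_on_of_le _ (d_prefactor * lambert_coef_max * (exp (eta ^ 2 / 2 * T) - 1))).
  intros rho Hrho; destruct (afun_bounds rho Hrho) as [Hlow Hup].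
  generalize (Rle_trans _ _ _ (Rmax_r _ _) Hlow) (bfun_le rho Hrho); lra.
Qed.

End Model.

Theorem lemma2 (T r nu mu eta sigma s0 lam gam : R)
  (hT : 0 < T) (heta : 0 < eta) (hsigma : 0 < sigma) (hs0 : 0 < s0)
  (hlam : 0 < lam) (hgam : 0 < gam) :
  let d := dfun T nu mu r eta sigma s0 lam gam in
  let g := gfun T nu mu r eta sigma s0 lam gam in
  let a := afun T nu mu r eta sigma s0 lam gam in
  let b := bfun T nu mu r eta sigma s0 lam gam in
  C1_on d (-1) 1 /\ C1_on g (-1) 1 /\
  (forall rho, -1 < rho < 1 -> 0 < d rho /\ 0 < g rho) /\
  filterlim d (at_left 1)
    (locally (lam * exp (- r * T) * s0
              * exp ((nu - eta * ((mu - r) / sigma) - eta ^ 2 / 2) * T))) /\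
  filterlim d (at_right (-1))
    (locally (lam * exp (- r * T) * s0
              * exp ((nu + eta * ((mu - r) / sigma) - eta ^ 2 / 2) * T))) /\
  filterlim g (at_left 1)
    (locally (lam * exp (- r * T) * s0
              * exp ((nu - eta * ((mu - r) / sigma)) * T))) /\
  filterlim g (at_right (-1))
    (locally (lam * exp (- r * T) * s0
              * exp ((nu + eta * ((mu - r) / sigma)) * T))) /\
  (forall rho, -1 < rho < 1 ->
     Rmax (b rho - lam * exp (- r * T) / theta lam gam rho
                   * ((wfun T nu mu r eta sigma s0 lam gam rho) ^ 2
                      / (2 * eta ^ 4 * T ^ 2)) * e2 T eta) 0
       <= a rho /\ a rho <= b rho) /\
  bounded_on a (-1) 1 /\ bounded_on b (-1) 1 /\
  bounded_on d (-1) 1 /\ bounded_on g (-1) 1.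
Proof.
  intros d g a b.
  split; [apply C1_on_dfun; assumption |].
  split; [apply C1_on_gfun; assumption |].
  split; [intros rho Hrho; split; [apply dfun_pos | apply gfun_pos]; assumption |].
  split; [apply filterlim_dfun_at_left_1; assumption |].
  split; [apply filterlim_dfun_at_right_neg_1; assumption |].
  split; [apply filterlim_gfun_at_left_1; assumption |].
  split; [apply filterlim_gfun_at_right_neg_1; assumption |].
  split; [intros rho Hrho; apply afun_bounds; assumption |].
  split; [apply bounded_on_afun; assumption |].
  split; [apply bounded_on_bfun; assumption |].
  split; [apply bounded_on_dfun | apply bounded_on_gfun]; assumption.
Qed.
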